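(* Let $A,B\in\mathbb R^{\mathcal N\times\mathcal N}$ with $A$ invertible, and assume that among the generalized eigenvalues $\lambda\in\mathbb C$ of $Av=\lambda Bv$ there is a unique positive one $\lambda>0$ of smallest modulus, and that it is simple. Let $u,u^*$, $k$, $M$, $\tilde u^*$, $P$, $P^*$ and the pseudo-inverses be as in the context. Let $u_N,u_N^*\in\mathbb R^{\mathcal N}$ with $\langle u_N^*,Au_N\rangle\ne0$, let $k_N:=\frac{\langle u_N^*,Bu_N\rangle}{\langle u_N^*,Au_N\rangle}$ satisfy $k_N\notin\sigma\big((PMP)|_{[\operatorname{Span}\{\tilde u^*\}]^\perp}\big)$ and $k_N\notin\sigma\big((P^*M^TP^* )|_{[\operatorname{Span}\{u\}]^\perp}\big)$, and let $$C_N^k:=\Big\|\big[P^*(P^*M^TP^*-k_NI)^+P^*\big]^T(M-kI)P(PMP-k_NI)^+PA^{-1}\Big\|.$$ Then $$C_N^k\le\frac{\|M-kI\|\,\|PA^{-1}\|}{\operatorname{dist}\big(k_N,\operatorname{Num}((PMP)|_{[\operatorname{Span}\{\tilde u^*\}]^\perp})\big)\;\operatorname{dist}\big(k_N,\operatorname{Num}((P^*M^TP^* )|_{[\operatorname{Span}\{u\}]^\perp})\big)},$$ where the right-hand side is read as $+\infty$ if one of the distances vanishes.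
   Context: $\mathbb R^{\mathcal N}$ carries the Euclidean inner product $\langle\cdot,\cdot\rangle$ and norm; matrix norms are induced operator norms. ''Simple'' means $k=1/\lambda$ is an algebraically simple eigenvalue of $M=A^{-1}B$. $u,u^*$ are unit vectors with $Au=\lambda Bu$, $A^Tu^*=\lambda B^Tu^*$; $\tilde u^*=A^Tu^*/\|A^Tu^*\|$; $P=I-\frac{u(\tilde u^* )^T}{\langle u,\tilde u^*\rangle}$, $P^*=I-\frac{\tilde u^*u^T}{\langle u,\tilde u^*\rangle}$ (here $\langle u,\tilde u^*\rangle\ne0$). $(PMP-k_NI)^+$ is the inverse of $(PMP-k_NI)|_{[\operatorname{Span}\{\tilde u^*\}]^\perp}$ on $[\operatorname{Span}\{\tilde u^*\}]^\perp$ and $0$ on $\operatorname{Span}\{u\}$; $(P^*M^TP^*-k_NI)^+$ is the inverse of $(P^*M^TP^*-k_NI)|_{[\operatorname{Span}\{u\}]^\perp}$ on $[\operatorname{Span}\{u\}]^\perp$ and $0$ on $\operatorname{Span}\{\tilde u^*\}$. For a linear map $Q$ of a subspace $W$ into itself, the numerical range is $\operatorname{Num}(Q)=\overline{\{\langle v,Qv\rangle: v\in W,\ \|v\|=1\}}$. *)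

From HB Require Import structures.
From mathcomp Require Import all_boot all_order all_algebra.
From mathcomp Require Import all_classical all_reals all_analysis.
From mathcomp Require Import complex.

Set Implicit Arguments.
Unset Strict Implicit.
Unset Printing Implicit Defensive.

Import Order.TTheory GRing.Theory Num.Theory.
Local Open Scope ring_scope.
Local Open Scope classical_set_scope.
Import numFieldNormedType.Exports.

Section Defs.
Variables (R : realType) (n : nat).

Definition dotv (x y : 'cV[R]_n) : R := \sum_(i < n) x i 0 * y i 0.

Definition vnorm (x : 'cV[R]_n) : R := Num.sqrt (dotv x x).

Definition opnorm (X : 'M[R]_n) : R :=
  sup [set vnorm (X *m x) | x in [set x : 'cV[R]_n | vnorm x = 1]].

Definition gen_eigenvalue (A B : 'M[R]_n) (l : R[i]) : Prop :=
  exists v : 'cV[R[i]]_n, v != 0 /\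
    map_mx (fun x : R => (x%:C)%C) A *m v
      = l *: (map_mx (fun x : R => (x%:C)%C) B *m v).

Definition perp (w : 'cV[R]_n) : set 'cV[R]_n := [set x | dotv x w = 0].

Definition in_spectrum_restr (Q : 'M[R]_n) (w : 'cV[R]_n) (k : R) : Prop :=
  exists x : 'cV[R]_n, x != 0 /\ perp w x /\ Q *m x = k *: x.

(* X = (Q - k I)^+ : inverse of (Q - k I)|_W on W = [Span{w}]^perp,
   and 0 on Span{c}. *)
Definition is_pinv (Q : 'M[R]_n) (k : R) (w c : 'cV[R]_n) (X : 'M[R]_n) : Prop :=
  (forall x, perp w x ->
     [/\ perp w (X *m x),
         X *m ((Q - k%:M) *m x) = x &
         (Q - k%:M) *m (X *m x) = x])
  /\ X *m c = 0.

Definition num_range (Q : 'M[R]_n) (w : 'cV[R]_n) : set R :=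
  @closure (Real.sort R : topologicalType) [set dotv x (Q *m x) | x in [set x | perp w x /\ vnorm x = 1]].

Definition dist_set (k : R) (S : set R) : R := inf [set `|k - s| | s in S].

End Defs.

From HB Require Import structures.
From mathcomp Require Import all_boot all_order all_algebra.
From mathcomp Require Import all_classical all_reals all_analysis.
From mathcomp Require Import complex.
From mathcomp Require Import ring.

(* If [X] inverts [Q - k] on [W = span{w}^perp], then
   [dist(k, Num(Q|_W)) |X x| <= |x|] on [W]. This bounds the right factor
   [P Xp P A^-1 = Xp P A^-1] directly. The left factor involves the oblique
   projector [Ps], whose norm is not controlled, so one bounds its transpose
   instead, which equals [Xs (M - k)^T]. *)

Set Implicit Arguments.
Unset Strict Implicit.
Unset Printing Implicit Defensive.

Import Order.TTheory GRing.Theory Num.Theory.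
Local Open Scope ring_scope.

Section Euclidean.
Variables (R : realType) (n : nat).
Implicit Types (x y z : 'cV[R]_n) (X Y : 'M[R]_n).

Lemma dotvE x y : dotv x y = (x^T *m y) 0 0.
Proof. by rewrite /dotv !mxE; apply: eq_bigr => i _; rewrite mxE. Qed.

Lemma dotvC x y : dotv x y = dotv y x.
Proof. by apply: eq_bigr => i _; rewrite mulrC. Qed.

Lemma dotv0l x : dotv 0 x = 0.
Proof. by rewrite /dotv big1 // => i _; rewrite mxE mul0r. Qed.

Lemma dotvBl x y z : dotv (x - y) z = dotv x z - dotv y z.
Proof.
by rewrite /dotv -sumrB; apply: eq_bigr => i _; rewrite !mxE mulrBl.
Qed.

Lemma dotvZl a x y : dotv (a *: x) y = a * dotv x y.
Proof. by rewrite /dotv mulr_sumr; apply: eq_bigr => i _; rewrite mxE mulrA. Qed.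

Lemma dotvBr x y z : dotv z (x - y) = dotv z x - dotv z y.
Proof. by rewrite !(dotvC z) dotvBl. Qed.

Lemma dotvZr a x y : dotv y (a *: x) = a * dotv y x.
Proof. by rewrite !(dotvC y) dotvZl. Qed.

Lemma dotv_mulmx x X y : dotv x (X *m y) = dotv (X^T *m x) y.
Proof. by rewrite !dotvE trmx_mul trmxK mulmxA. Qed.

Lemma trmx_mulmx_dotv x y : x^T *m y = (dotv x y)%:M.
Proof. by apply/matrixP => i j; rewrite !ord1 dotvE [RHS]mxE eqxx mulr1n. Qed.

Lemma dotv_ge0 x : 0 <= dotv x x.
Proof. by apply: sumr_ge0 => i _; rewrite -expr2 sqr_ge0. Qed.

Lemma dotv_eq0 x : (dotv x x == 0) = (x == 0).
Proof.
apply/idP/eqP => [/eqP x0 | ->]; last by rewrite dotv0l.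
apply/matrixP => i j; rewrite ord1 mxE; apply/eqP; rewrite -sqrf_eq0 expr2.
by move/psumr_eq0P: x0 => -> // l _; rewrite -expr2 sqr_ge0.
Qed.

Lemma vnorm_ge0 x : 0 <= vnorm x.
Proof. exact: sqrtr_ge0. Qed.

Lemma vnorm_sq x : vnorm x ^+ 2 = dotv x x.
Proof. by rewrite sqr_sqrtr // dotv_ge0. Qed.

Lemma vnorm_eq0 x : (vnorm x == 0) = (x == 0).
Proof. by rewrite sqrtr_eq0 le_eqVlt ltNge dotv_ge0 orbF dotv_eq0. Qed.

Lemma vnorm0 : vnorm (0 : 'cV[R]_n) = 0.
Proof. by apply/eqP; rewrite vnorm_eq0. Qed.

Lemma vnormZ a x : vnorm (a *: x) = `|a| * vnorm x.
Proof.
by rewrite /vnorm dotvZl dotvZr mulrA sqrtrM ?sqrtr_sqr // -expr2 sqr_ge0.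
Qed.

Lemma cauchy_schwarz x y : `|dotv x y| <= vnorm x * vnorm y.
Proof.
have [->|x0] := eqVneq x 0.
  by rewrite dotv0l normr0 mulr_ge0 ?vnorm_ge0.
set a := dotv x y; set b := dotv x x.
have b_gt0 : 0 < b by rewrite lt_def dotv_eq0 x0 dotv_ge0.
have : 0 <= dotv (b *: y - a *: x) (b *: y - a *: x) by apply: dotv_ge0.
have -> : dotv (b *: y - a *: x) (b *: y - a *: x) = b * (b * dotv y y - a ^+ 2).
  by rewrite !dotvBl !dotvBr !dotvZl !dotvZr -/a -/b (dotvC y x) -/a; ring.
rewrite pmulr_rge0 // subr_ge0 => a2_le.
by rewrite /vnorm -/b -sqrtrM ?dotv_ge0 // -sqrtr_sqr ler_sqrt ?mulr_ge0 ?dotv_ge0.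
Qed.

Lemma eq_mx_cV X Y : (forall x, X *m x = Y *m x) -> X = Y.
Proof.
move=> XY; apply/matrixP => i j.
by have := congr1 (fun v : 'cV_n => v i 0) (XY (delta_mx j 0)); rewrite -!colE !mxE.
Qed.

End Euclidean.

Section OperatorNorm.
Variables (R : realType) (n : nat).
Implicit Types (x : 'cV[R]_n) (X Y : 'M[R]_n).

Let unit_image X :=
  [set vnorm (X *m x) | x in [set x : 'cV[R]_n | vnorm x = 1]]%classic.

Lemma coord_norm_le1 x (j : 'I_n) : vnorm x = 1 -> `|x j 0| <= 1.
Proof.
move=> x1; rewrite -sqrtr_sqr -sqrtr1 ler_sqrt // -(expr1n R 2) -x1 vnorm_sq.
rewrite /dotv (bigD1 j) //= -expr2 lerDl.
by apply: sumr_ge0 => i _; rewrite -expr2 sqr_ge0.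
Qed.

(* Any entrywise bound will do: only the existence of the supremum matters. *)
Lemma vnorm_mulmx_unit_le X x : vnorm x = 1 ->
  vnorm (X *m x) <= Num.sqrt (\sum_(i < n) (\sum_(j < n) `|X i j|) ^+ 2).
Proof.
move=> x1; rewrite ler_sqrt; last by apply: sumr_ge0 => i _; rewrite sqr_ge0.
apply: ler_sum => i _; rewrite -expr2 -real_normK ?num_real //.
apply: lerXn2r; rewrite ?nnegrE ?normr_ge0 ?sumr_ge0 //.
rewrite mxE; apply: le_trans (ler_norm_sum _ _ _) _.
by apply: ler_sum => j _; rewrite normrM ler_piMr ?coord_norm_le1.
Qed.

Lemma unit_image_has_sup X : (unit_image X !=set0)%classic -> has_sup (unit_image X).
Proof. by split=> //; eexists => _ [x x1 <-]; apply: vnorm_mulmx_unit_le. Qed.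

Lemma opnorm_ge0 X : 0 <= opnorm X.
Proof.
rewrite /opnorm -/(unit_image X).
have [->|/set0P ne] := eqVneq (unit_image X) set0%classic; first by rewrite sup0.
have [_ [x x1 _]] := ne.
have Xx : unit_image X (vnorm (X *m x)) by exists x.
exact: le_trans (vnorm_ge0 _) (sup_upper_bound (unit_image_has_sup ne) Xx).
Qed.

Lemma vnorm_mulmx_le X x : vnorm (X *m x) <= opnorm X * vnorm x.
Proof.
have [->|x0] := eqVneq x 0; first by rewrite mulmx0 vnorm0 mulr0.
have x_gt0 : 0 < vnorm x by rewrite lt_def vnorm_eq0 x0 vnorm_ge0.
set y := (vnorm x)^-1 *: x.
have y1 : vnorm y = 1 by rewrite vnormZ ger0_norm ?invr_ge0 ?vnorm_ge0 ?mulVf ?gt_eqF.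
have Xy : unit_image X (vnorm (X *m y)) by exists y.
have := sup_upper_bound (unit_image_has_sup (ex_intro _ _ Xy)) Xy.
rewrite -scalemxAr vnormZ ger0_norm ?invr_ge0 ?vnorm_ge0 // mulrC.
by rewrite -ler_pdivrMr.
Qed.

Lemma opnorm_le X b :
  0 <= b -> (forall x, vnorm (X *m x) <= b * vnorm x) -> opnorm X <= b.
Proof.
move=> b_ge0 Xb; rewrite /opnorm -/(unit_image X).
have [->|/set0P ne] := eqVneq (unit_image X) set0%classic; first by rewrite sup0.
by apply: ge_sup => // _ [x x1 <-]; rewrite -[b]mulr1 -x1.
Qed.

Lemma opnorm_trmx_le X : opnorm X^T <= opnorm X.
Proof.
apply: opnorm_le (opnorm_ge0 X) _ => x; set v := X^T *m x.
have sq : vnorm v ^+ 2 <= opnorm X * vnorm x * vnorm v.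
  rewrite vnorm_sq {2}/v dotv_mulmx trmxK.
  apply: le_trans (ler_norm _) _; apply: le_trans (cauchy_schwarz _ _) _.
  by rewrite mulrAC ler_wpM2r ?vnorm_ge0 ?vnorm_mulmx_le.
have [->|v0] := eqVneq (vnorm v) 0; first by rewrite mulr_ge0 ?opnorm_ge0 ?vnorm_ge0.
by rewrite expr2 ler_pM2r ?lt_def ?v0 ?vnorm_ge0 in sq.
Qed.

Lemma opnorm_trmx X : opnorm X^T = opnorm X.
Proof.
by apply/eqP; rewrite eq_le opnorm_trmx_le /= -{1}[X]trmxK opnorm_trmx_le.
Qed.

Lemma opnorm_mulmx_le X Y : opnorm (X *m Y) <= opnorm X * opnorm Y.
Proof.
apply: opnorm_le => [|x]; first by rewrite mulr_ge0 ?opnorm_ge0.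
rewrite -mulmxA -mulrA; apply: le_trans (vnorm_mulmx_le _ _) _.
by rewrite ler_wpM2l ?opnorm_ge0 ?vnorm_mulmx_le.
Qed.

End OperatorNorm.

Section ObliqueProjection.
Variables (R : realType) (n : nat) (p q : 'cV[R]_n) (c : R).
Local Notation Pq := (1%:M - c^-1 *: (p *m q^T)).

Lemma proj_mulmx x : Pq *m x = x - (c^-1 * dotv q x) *: p.
Proof.
rewrite mulmxBl mul1mx -scalemxAl -mulmxA trmx_mulmx_dotv mul_mx_scalar.
by rewrite scalerA mulrC.
Qed.

Lemma proj_perp x : c = dotv q p -> c != 0 -> perp q (Pq *m x).
Proof.
move=> qp c0; rewrite /perp /= proj_mulmx dotvBl dotvZl (dotvC x) (dotvC p) -qp.
by rewrite mulrAC mulVf // mul1r subrr.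
Qed.

Lemma proj_id x : perp q x -> Pq *m x = x.
Proof. by rewrite /perp /= proj_mulmx dotvC => ->; rewrite mulr0 scale0r subr0. Qed.

Lemma proj_mulmx_id (Y : 'M[R]_n) : (forall x, perp q (Y *m x)) -> Pq *m Y = Y.
Proof. by move=> qY; apply: eq_mx_cV => x; rewrite -mulmxA proj_id. Qed.

Lemma mulmx_proj_id (T : 'M[R]_n) : T *m p = 0 -> T *m Pq = T.
Proof.
by move=> Tp; rewrite mulmxBr mulmx1 -scalemxAr mulmxA Tp mul0mx scaler0 subr0.
Qed.

End ObliqueProjection.

Section PseudoInverse.
Variables (R : realType) (n : nat) (Q X : 'M[R]_n) (k : R) (w c : 'cV[R]_n).
Hypothesis X_pinv : is_pinv Q k w c X.
Local Notation d := (dist_set k (num_range Q w)).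

Lemma pinv_perp x : perp w x -> perp w (X *m x).
Proof. by case/X_pinv.1. Qed.

(* The Rayleigh quotient [e] of [y = X x] lies in the numerical range, and
   [<y, x> = <y, (Q - k) y> = (e - k) |y|^2]. *)
Lemma pinv_dist_le x : perp w x -> d * vnorm (X *m x) <= vnorm x.
Proof.
move=> wx; have [wy _ QXx] := X_pinv.1 x wx; set y := X *m x in wy QXx *.
have [->|y0] := eqVneq y 0; first by rewrite vnorm0 mulr0 vnorm_ge0.
have y_gt0 : 0 < vnorm y by rewrite lt_def vnorm_eq0 y0 vnorm_ge0.
set e := dotv y (Q *m y) / vnorm y ^+ 2.
have e_num : num_range Q w e.
  apply: subset_closure; exists ((vnorm y)^-1 *: y).
    split; first by rewrite /perp /= dotvZl wy mulr0.
    by rewrite vnormZ ger0_norm ?invr_ge0 ?vnorm_ge0 ?mulVf ?gt_eqF.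
  by rewrite -scalemxAr dotvZl dotvZr mulrA -expr2 exprVn mulrC.
have d_le : d <= `|k - e|.
  apply: ge_inf; last by exists e.
  by exists 0 => _ [s _ <-]; apply: normr_ge0.
have yx : `|k - e| * vnorm y ^+ 2 = `|dotv y x|.
  rewrite -[vnorm y ^+ 2]ger0_norm ?sqr_ge0 // -normrM -normrN; congr `|_|.
  rewrite -QXx mulmxBl mul_scalar_mx dotvBr dotvZr -vnorm_sq /e.
  by field; rewrite gt_eqF.
have : d * vnorm y ^+ 2 <= vnorm y * vnorm x.
  by apply: le_trans (cauchy_schwarz y x); rewrite -yx ler_wpM2r ?sqr_ge0.
by rewrite expr2 mulrA [_ * vnorm x]mulrC ler_pM2r.
Qed.

Lemma opnorm_pinv_mulmx_le (Y : 'M[R]_n) :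
  0 < d -> (forall x, perp w (Y *m x)) -> opnorm (X *m Y) <= opnorm Y / d.
Proof.
move=> d_gt0 wY; apply: opnorm_le => [|x]; first by rewrite divr_ge0 ?opnorm_ge0 ?ltW.
rewrite -mulmxA mulrAC ler_pdivlMr // mulrC.
exact: le_trans (pinv_dist_le (wY x)) (vnorm_mulmx_le _ _).
Qed.

Lemma pinv_commute (T : 'M[R]_n) y :
  (forall x, perp w x -> perp w (T *m x)) ->
  (forall x, perp w x -> T *m (Q *m x) = Q *m (T *m x)) ->
  perp w y -> X *m (T *m y) = T *m (X *m y).
Proof.
move=> wT TQ wy; have [wz _ QXy] := X_pinv.1 y wy; set z := X *m y in wz QXy *.
have QTz : (Q - k%:M) *m (T *m z) = T *m y.
  by rewrite -QXy !mulmxBl mulmxBr !mul_scalar_mx TQ // scalemxAr.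
by have [_ <- _] := X_pinv.1 _ (wT _ wz); rewrite QTz.
Qed.

End PseudoInverse.

Section Eigenvectors.
Variables (R : realType) (n : nat) (A B : 'M[R]_n) (l : R).
Hypotheses (A_unit : A \in unitmx) (l_neq0 : l != 0).

Lemma invmx_mulmx_eigenvector (x : 'cV[R]_n) :
  A *m x = l *: (B *m x) -> invmx A *m B *m x = l^-1 *: x.
Proof.
move=> Ax; have Bx : B *m x = l^-1 *: (A *m x) by rewrite Ax scalerA mulVf ?scale1r.
by rewrite -mulmxA Bx -scalemxAr mulKmx.
Qed.

Lemma trmx_invmx_mulmx_eigenvector (y : 'cV[R]_n) :
  A^T *m y = l *: (B^T *m y) ->
  (invmx A *m B)^T *m (A^T *m y) = l^-1 *: (A^T *m y).
Proof.
move=> Ay; rewrite trmx_mul -mulmxA (mulmxA (invmx A)^T) -trmx_mul mulmxV //.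
by rewrite trmx1 mul1mx Ay scalerA mulVf ?scale1r.
Qed.

End Eigenvectors.

Section DeflatedTranspose.
Variables (R : realType) (n : nat) (M X : 'M[R]_n) (k kN : R) (u v : 'cV[R]_n).
Hypotheses (Mu : M *m u = k *: u) (MTv : M^T *m v = k *: v) (uv : dotv u v != 0).
Local Notation Pv := (1%:M - (dotv u v)^-1 *: (v *m u^T)).
Hypothesis X_pinv : is_pinv (Pv *m M^T *m Pv) kN u v X.
Local Notation T := (M - k%:M)^T.

Lemma trmx_stable_perp x : perp u x -> perp u (M^T *m x).
Proof.
by rewrite /perp /= => ux; rewrite dotvC dotv_mulmx trmxK Mu dotvZl dotvC ux mulr0.
Qed.

Lemma trmx_eigen_perp x : perp u (T *m x).
Proof.
by rewrite /perp /= dotvC dotv_mulmx trmxK mulmxBl Mu mul_scalar_mx subrr dotv0l.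
Qed.

Lemma deflated_mulmx x : perp u x -> Pv *m M^T *m Pv *m x = M^T *m x.
Proof.
by move=> ux; rewrite -!mulmxA (proj_id _ _ ux) (proj_id _ _ (trmx_stable_perp ux)).
Qed.

(* Both sides of [T Pv X Pv = X T] only see [u^perp], where [Pv M^T Pv] is
   [M^T], which commutes with [T]. *)
Lemma trmx_eigen_pinv : T *m (Pv *m X *m Pv) = X *m T.
Proof.
have TMT : T *m M^T = M^T *m T.
  by rewrite -!trmx_mul mulmxBl mulmxBr mul_mx_scalar mul_scalar_mx.
have XT y : perp u y -> X *m (T *m y) = T *m (X *m y).
  apply: (pinv_commute X_pinv) => [x _|x ux]; first exact: trmx_eigen_perp.
  by rewrite (deflated_mulmx ux) (deflated_mulmx (trmx_eigen_perp x)) !mulmxA TMT.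
have Tv : T *m v = 0 by rewrite linearB /= tr_scalar_mx mulmxBl MTv mul_scalar_mx subrr.
apply: eq_mx_cV => x; have Pvx := proj_perp x (erefl _) uv.
rewrite -!mulmxA (proj_id _ _ (pinv_perp X_pinv Pvx)) -(XT _ Pvx).
by rewrite [T *m (Pv *m x)]mulmxA mulmx_proj_id.
Qed.

End DeflatedTranspose.

Theorem proposition4 (R : realType) (N : nat)
  (A B : 'M[R]_N) (lambda : R) (u us uN usN : 'cV[R]_N)
  (Xp Xs : 'M[R]_N) :
  A \in unitmx ->
  (* lambda > 0 is a generalized eigenvalue, the unique one of smallest modulus *)
  0 < lambda ->
  gen_eigenvalue A B (lambda%:C)%C ->
  (forall mu : R[i], gen_eigenvalue A B mu -> mu != (lambda%:C)%C ->
     (lambda%:C)%C < `|mu|) ->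
  let k := lambda^-1 in
  let M := invmx A *m B in
  (* k is an algebraically simple eigenvalue of M *)
  mup k (char_poly M) = 1%N ->
  vnorm u = 1 -> vnorm us = 1 ->
  A *m u = lambda *: (B *m u) ->
  A^T *m us = lambda *: (B^T *m us) ->
  let ust := (vnorm (A^T *m us))^-1 *: (A^T *m us) in
  dotv u ust != 0 ->
  let P := 1%:M - (dotv u ust)^-1 *: (u *m ust^T) in
  let Ps := 1%:M - (dotv u ust)^-1 *: (ust *m u^T) in
  dotv usN (A *m uN) != 0 ->
  let kN := dotv usN (B *m uN) / dotv usN (A *m uN) in
  ~ in_spectrum_restr (P *m M *m P) ust kN ->
  ~ in_spectrum_restr (Ps *m M^T *m Ps) u kN ->
  is_pinv (P *m M *m P) kN ust u Xp ->
  is_pinv (Ps *m M^T *m Ps) kN u ust Xs ->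
  let CNk := opnorm ((Ps *m Xs *m Ps)^T *m (M - k%:M) *m P *m Xp *m P *m invmx A) in
  let d1 := dist_set kN (num_range (P *m M *m P) ust) in
  let d2 := dist_set kN (num_range (Ps *m M^T *m Ps) u) in
  (* the right-hand side is +oo when d1 = 0 or d2 = 0 *)
  0 < d1 -> 0 < d2 ->
  CNk <= opnorm (M - k%:M) * opnorm (P *m invmx A) / (d1 * d2).
Proof.
move=> A_unit lambda_gt0 _ _ k M _ _ _ Au ATus ust u_ust P Ps _ kN _ _.
move=> Xp_pinv Xs_pinv CNk d1 d2 d1_gt0 d2_gt0.
have lambda_neq0 : lambda != 0 by rewrite gt_eqF.
have Mu : M *m u = k *: u := invmx_mulmx_eigenvector A_unit lambda_neq0 Au.
have MTust : M^T *m ust = k *: ust.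
  rewrite /ust -scalemxAr (trmx_invmx_mulmx_eigenvector A_unit lambda_neq0 ATus).
  by rewrite !scalerA mulrC.
have left_tr : ((Ps *m Xs *m Ps)^T *m (M - k%:M))^T = Xs *m (M - k%:M)^T.
  by rewrite trmx_mul trmxK (trmx_eigen_pinv Mu MTust u_ust Xs_pinv).
have P_perp x : perp ust (P *m x) := proj_perp x (dotvC u ust) u_ust.
have right_eq : P *m Xp *m P *m invmx A = Xp *m (P *m invmx A).
  rewrite -!mulmxA proj_mulmx_id // => x.
  by rewrite -!mulmxA; exact: (pinv_perp Xp_pinv (P_perp (invmx A *m x))).
rewrite /CNk (_ : _ *m invmx A =
  ((Ps *m Xs *m Ps)^T *m (M - k%:M)) *m (Xp *m (P *m invmx A))); last first.
  by rewrite -right_eq !mulmxA.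
apply: le_trans (opnorm_mulmx_le _ _) _; rewrite -opnorm_trmx left_tr.
have left_le : opnorm (Xs *m (M - k%:M)^T) <= opnorm (M - k%:M) / d2.
  have := opnorm_pinv_mulmx_le Xs_pinv d2_gt0 (trmx_eigen_perp Mu).
  by rewrite opnorm_trmx.
have right_le : opnorm (Xp *m (P *m invmx A)) <= opnorm (P *m invmx A) / d1.
  have PA_perp x : perp ust (P *m invmx A *m x) by rewrite -mulmxA.
  by have := opnorm_pinv_mulmx_le Xp_pinv d1_gt0 PA_perp.
apply: le_trans (ler_pM (opnorm_ge0 _) (opnorm_ge0 _) left_le right_le) _.
by rewrite mulf_div [d2 * d1]mulrC.
Qed.
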